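(* Let $P_1$ be a $C_\pi$ process and suppose $P_1\xrightarrow{\alpha_1}P_2\xrightarrow{\alpha_2}\cdots\xrightarrow{\alpha_m}P_{m+1}$, where all bound outputs are chosen fresh. Suppose that for some $i\in\{1,\dots,m-1\}$ we have $\alpha_i=k(l)$ and $l\notin\mathrm{fo}(P_i)$. Then $\alpha_j\neq\overline{k'}\langle l\rangle$ for every channel $k'$ and every $j=i+1,\dots,m$.
   Context: The Confidential $\pi$-calculus $C_\pi$. There are two disjoint countable sets: ${\cal V}$ of variables (ranged over by $x,y,z,\dots$) and ${\cal C}$ of channels (ranged over by $k,l,m,n,\dots$). Let ${\cal N}={\cal V}\cup{\cal C}$, ranged over by $a,b,c,\dots$. Prefixes: $\pi ::= \overline{a}\langle k\rangle \mid a(x) \mid [a=b]\pi$. Processes: $P ::= 0 \mid \pi.P \mid P\,|\,P \mid (\nu k)P \mid\, !P$. The object of an output is always a channel, and the bound object of an input is always a variable. In $(\nu k)P$ the channel $k$ is bound, and in $a(x).P$ the variable $x$ is bound, with scope $P$. The sets $\mathrm{fn}(P)$, $\mathrm{bn}(P)$ and $\mathrm{n}(P)$ are the free, bound and all names of $P$. The set $\mathrm{fo}(P)$ consists of the free channels of $P$ that occur as objects of output prefixes in $P$. Processes are identified up to $\alpha$-conversion. Actions: $\alpha ::= \overline{k}\langle l\rangle \mid k(l) \mid (\nu l)\overline{k}\langle l\rangle \mid \tau$, where $k,l$ are channels. We have $\mathrm{fn}(\overline{k}\langle l\rangle)=\mathrm{fn}(k(l))=\{k,l\}$, $\mathrm{fn}((\nu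 l)\overline{k}\langle l\rangle)=\{k\}$, $\mathrm{bn}((\nu l)\overline{k}\langle l\rangle)=\{l\}$, all other bound-name sets are empty, $\mathrm{fn}(\tau)=\emptyset$, and $\mathrm{n}(\alpha)=\mathrm{fn}(\alpha)\cup\mathrm{bn}(\alpha)$. The labelled transition relation $\xrightarrow{\alpha}$ is the least relation closed under the following rules: - (out) $\overline{k}\langle l\rangle.P \xrightarrow{\overline{k}\langle l\rangle} P$. - (in) $k(x).P \xrightarrow{k(l)} P\{l/x\}$ for every channel $l$. - (match) If $\pi.P\xrightarrow{\alpha}P'$, then $[a=a]\pi.P\xrightarrow{\alpha}P'$. - (res) If $P\xrightarrow{\alpha}P'$ and $k\notin \mathrm{n}(\alpha)$, then $(\nu k)P\xrightarrow{\alpha}(\nu k)P'$. - (open) If $P\xrightarrow{\overline{k}\langle l\rangle}Q$ and $k\neq l$, then $(\nu l)P\xrightarrow{(\nu l)\overline{k}\langle l\rangle}Q$. - (par-l) If $P\xrightarrow{\alpha}Q$ and $\mathrm{bn}(\alpha)\cap\mathrm{fn}(R)=\emptyset$, then $P|R\xrightarrow{\alpha}Q|R$. - (comm-l) If $P\xrightarrow{\overline{k}\langle l\rangle}P'$ and $Q\xrightarrow{k(l)}Q'$, then $P|Q\xrightarrow{\tau}P'|Q'$. - (close-l) If $P\xrightarrow{(\nu l)\overline{k}\langle l\rangle}P'$, $Q\xrightarrow{k(l)}Q'$ and $l\notin\mathrm{fn}(Q)$, then $P|Q\xrightarrow{\tau}(\nu l)(P'|Q')$. - The symmetric rules (par-r),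 (comm-r), (close-r). - (rep-act) If $P\xrightarrow{\alpha}P'$, then $!P\xrightarrow{\alpha}P'|!P$. - (rep-comm) If $P\xrightarrow{\overline{k}\langle l\rangle}P'$ and $P\xrightarrow{k(l)}P''$, then $!P\xrightarrow{\tau}(P'|P'')|!P$. - (rep-close) If $P\xrightarrow{(\nu l)\overline{k}\langle l\rangle}P'$, $P\xrightarrow{k(l)}P''$ and $l\notin\mathrm{fn}(P)$, then $!P\xrightarrow{\tau}(\nu l)(P'|P'')|!P$. *)

(* Locally nameless encoding of the Confidential pi-calculus C_pi:
   alpha-conversion is built in (bound channels / bound variables are de Bruijn
   indices; free channels / free variables are named by nat). *)
From Stdlib Require Import Arith List Bool.
Import ListNotations.

(* channels: free channel k, or bound channel (index of an enclosing nu) *)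
Inductive chan : Type := CF (k : nat) | CB (i : nat).
(* variables: free variable x, or bound variable (index of an enclosing input) *)
Inductive var : Type := VF (x : nat) | VB (i : nat).
Inductive name : Type := NC (c : chan) | NV (v : var).

(* prefixes: output a<c> (object always a channel), input a(x) (binder, nameless),
   match [a=b]pi *)
Inductive prefix : Type :=
| POut (a : name) (c : chan)
| PIn (a : name)
| PMatch (a b : name) (p : prefix).

Inductive proc : Type :=
| Nil
| Pre (p : prefix) (P : proc)
| Par (P Q : proc)
| Nu (P : proc)
| Bang (P : proc).

Fixpoint binds (p : prefix) : bool :=
  match p with
  | POut _ _ => false
  | PIn _ => true
  | PMatch _ _ q => binds q
  end.

(* ---------- opening a bound channel with a free channel l ---------- *)
Definition oc_chan (n l : nat) (c : chan) : chan :=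
  match c with CB i => if Nat.eqb i n then CF l else c | CF _ => c end.
Definition oc_name (n l : nat) (a : name) : name :=
  match a with NC c => NC (oc_chan n l c) | NV _ => a end.
Fixpoint oc_pre (n l : nat) (p : prefix) : prefix :=
  match p with
  | POut a c => POut (oc_name n l a) (oc_chan n l c)
  | PIn a => PIn (oc_name n l a)
  | PMatch a b q => PMatch (oc_name n l a) (oc_name n l b) (oc_pre n l q)
  end.
Fixpoint oc (n l : nat) (P : proc) : proc :=
  match P with
  | Nil => Nil
  | Pre p Q => Pre (oc_pre n l p) (oc n l Q)
  | Par Q R => Par (oc n l Q) (oc n l R)
  | Nu Q => Nu (oc (S n) l Q)
  | Bang Q => Bang (oc n l Q)
  end.

(* ---------- closing: abstract the free channel l as bound index n ---------- *)
Definition cc_chan (n l : nat) (c : chan) : chan :=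
  match c with CF k => if Nat.eqb k l then CB n else c | CB _ => c end.
Definition cc_name (n l : nat) (a : name) : name :=
  match a with NC c => NC (cc_chan n l c) | NV _ => a end.
Fixpoint cc_pre (n l : nat) (p : prefix) : prefix :=
  match p with
  | POut a c => POut (cc_name n l a) (cc_chan n l c)
  | PIn a => PIn (cc_name n l a)
  | PMatch a b q => PMatch (cc_name n l a) (cc_name n l b) (cc_pre n l q)
  end.
Fixpoint cc (n l : nat) (P : proc) : proc :=
  match P with
  | Nil => Nil
  | Pre p Q => Pre (cc_pre n l p) (cc n l Q)
  | Par Q R => Par (cc n l Q) (cc n l R)
  | Nu Q => Nu (cc (S n) l Q)
  | Bang Q => Bang (cc n l Q)
  end.

(* ---------- substitution P{l/x} of the bound variable with index n by channel l ---------- *)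
Definition ov_name (n l : nat) (a : name) : name :=
  match a with
  | NV (VB i) => if Nat.eqb i n then NC (CF l) else a
  | _ => a
  end.
Fixpoint ov_pre (n l : nat) (p : prefix) : prefix :=
  match p with
  | POut a c => POut (ov_name n l a) c
  | PIn a => PIn (ov_name n l a)
  | PMatch a b q => PMatch (ov_name n l a) (ov_name n l b) (ov_pre n l q)
  end.
Fixpoint ov (n l : nat) (P : proc) : proc :=
  match P with
  | Nil => Nil
  | Pre p Q => Pre (ov_pre n l p) (ov (if binds p then S n else n) l Q)
  | Par Q R => Par (ov n l Q) (ov n l R)
  | Nu Q => Nu (ov n l Q)
  | Bang Q => Bang (ov n l Q)
  end.

Definition lc_chan (nc : nat) (c : chan) : bool :=
  match c with CB i => Nat.ltb i nc | CF _ => true end.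
Definition lc_name (nc nv : nat) (a : name) : bool :=
  match a with
  | NC c => lc_chan nc c
  | NV (VB i) => Nat.ltb i nv
  | NV (VF _) => true
  end.
Fixpoint lc_pre (nc nv : nat) (p : prefix) : bool :=
  match p with
  | POut a c => lc_name nc nv a && lc_chan nc c
  | PIn a => lc_name nc nv a
  | PMatch a b q => lc_name nc nv a && lc_name nc nv b && lc_pre nc nv q
  end.
Fixpoint lc_at (nc nv : nat) (P : proc) : bool :=
  match P with
  | Nil => true
  | Pre p Q => lc_pre nc nv p && lc_at nc (if binds p then S nv else nv) Q
  | Par Q R => lc_at nc nv Q && lc_at nc nv R
  | Nu Q => lc_at (S nc) nv Q
  | Bang Q => lc_at nc nv Q
  end.
Definition lc (P : proc) : bool := lc_at 0 0 P.

(* ---------- free channels fn(P) (channels only; free variables are never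
   relevant to action names) ---------- *)
Definition chan_is (l : nat) (c : chan) : bool :=
  match c with CF k => Nat.eqb k l | CB _ => false end.
Definition name_is (l : nat) (a : name) : bool :=
  match a with NC c => chan_is l c | NV _ => false end.
Fixpoint pre_fn (l : nat) (p : prefix) : bool :=
  match p with
  | POut a c => name_is l a || chan_is l c
  | PIn a => name_is l a
  | PMatch a b q => name_is l a || name_is l b || pre_fn l q
  end.
Fixpoint in_fn (l : nat) (P : proc) : bool :=
  match P with
  | Nil => false
  | Pre p Q => pre_fn l p || in_fn l Q
  | Par Q R => in_fn l Q || in_fn l R
  | Nu Q => in_fn l Q
  | Bang Q => in_fn l Q
  end.

(* ---------- fo(P): free channels occurring as objects of output prefixes ---------- *)
Fixpoint pre_fo (l : nat) (p : prefix) : bool :=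
  match p with
  | POut _ c => chan_is l c
  | PIn _ => false
  | PMatch _ _ q => pre_fo l q
  end.
Fixpoint in_fo (l : nat) (P : proc) : bool :=
  match P with
  | Nil => false
  | Pre p Q => pre_fo l p || in_fo l Q
  | Par Q R => in_fo l Q || in_fo l R
  | Nu Q => in_fo l Q
  | Bang Q => in_fo l Q
  end.

Inductive act : Type :=
| AOut (k l : nat)
| AIn (k l : nat)
| ABOut (k l : nat)    (* (nu l) k-bar<l> *)
| ATau.

Definition act_fn (a : act) : list nat :=
  match a with
  | AOut k l => [k; l] | AIn k l => [k; l] | ABOut k _ => [k] | ATau => []
  end.
Definition act_bn (a : act) : list nat :=
  match a with ABOut _ l => [l] | _ => [] end.
Definition act_n (a : act) : list nat := act_fn a ++ act_bn a.

Inductive trans : proc -> act -> proc -> Prop :=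
| t_out : forall k l P,
    trans (Pre (POut (NC (CF k)) (CF l)) P) (AOut k l) P
| t_in : forall k l P,
    trans (Pre (PIn (NC (CF k))) P) (AIn k l) (ov 0 l P)
| t_match : forall a p P al P',
    trans (Pre p P) al P' -> trans (Pre (PMatch a a p) P) al P'
| t_res : forall P al k P',
    (* (nu k)P with k chosen (by alpha-conversion) not free in the body *)
    in_fn k P = false -> ~ In k (act_n al) ->
    trans (oc 0 k P) al P' -> trans (Nu P) al (Nu (cc 0 k P'))
| t_open : forall P k l Q,
    in_fn l P = false -> k <> l ->
    trans (oc 0 l P) (AOut k l) Q -> trans (Nu P) (ABOut k l) Q
| t_parl : forall P Q R al,
    trans P al Q -> (forall l, In l (act_bn al) -> in_fn l R = false) ->
    trans (Par P R) al (Par Q R)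
| t_parr : forall P Q R al,
    trans P al Q -> (forall l, In l (act_bn al) -> in_fn l R = false) ->
    trans (Par R P) al (Par R Q)
| t_comml : forall P P' Q Q' k l,
    trans P (AOut k l) P' -> trans Q (AIn k l) Q' ->
    trans (Par P Q) ATau (Par P' Q')
| t_commr : forall P P' Q Q' k l,
    trans P (AIn k l) P' -> trans Q (AOut k l) Q' ->
    trans (Par P Q) ATau (Par P' Q')
| t_closel : forall P P' Q Q' k l,
    trans P (ABOut k l) P' -> trans Q (AIn k l) Q' -> in_fn l Q = false ->
    trans (Par P Q) ATau (Nu (cc 0 l (Par P' Q')))
| t_closer : forall P P' Q Q' k l,
    trans P (AIn k l) P' -> trans Q (ABOut k l) Q' -> in_fn l P = false ->
    trans (Par P Q) ATau (Nu (cc 0 l (Par P' Q')))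
| t_repact : forall P al P',
    trans P al P' -> trans (Bang P) al (Par P' (Bang P))
| t_repcomm : forall P P' P'' k l,
    trans P (AOut k l) P' -> trans P (AIn k l) P'' ->
    trans (Bang P) ATau (Par (Par P' P'') (Bang P))
| t_repclose : forall P P' P'' k l,
    trans P (ABOut k l) P' -> trans P (AIn k l) P'' -> in_fn l P = false ->
    trans (Bang P) ATau (Par (Nu (cc 0 l (Par P' P''))) (Bang P)).

From Stdlib Require Import Arith List Bool Lia.

(* The proof is an invariant argument on fo.  An output action k<l> of P
   requires l in fo(P) (lemma [free_output_in_fo]).  Conversely a
   transition P --al--> P' can enlarge fo only by extruding a restricted
   channel, i.e. fo(P') is contained in fo(P) plus l when al = (nu l)k<l>
   (lemma [fo_step]): inputs substitute variables, which never occur as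
   output objects (objects are channels), and opening a restriction only
   introduces the opened channel itself.  Along a run in which l is never
   extruded, l not in fo(P_i) thus persists ([fo_run_not_extruded]).  In
   the theorem, l occurs in the input a_i = k(l), so freshness of bound
   outputs forbids any later extrusion of l; hence l stays outside fo and
   no later action can be a free output of l. *)

Definition extrudes (al : act) (x : nat) : Prop := exists k, al = ABOut k x.

Lemma chan_is_oc x n k c :
  chan_is x (oc_chan n k c) = true -> x = k \/ chan_is x c = true.
Proof.
  destruct c as [c | i]; simpl; auto.
  destruct (Nat.eqb i n); simpl; [rewrite Nat.eqb_eq|]; auto.
Qed.

Lemma pre_fo_oc x n k p :
  pre_fo x (oc_pre n k p) = true -> x = k \/ pre_fo x p = true.
Proof. induction p; simpl; intros; try discriminate; eauto using chan_is_oc. Qed.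

Lemma in_fo_oc x P : forall n k,
  in_fo x (oc n k P) = true -> x = k \/ in_fo x P = true.
Proof.
  induction P as [| p P IH | P IHP Q IHQ | P IH | P IH];
    simpl; intros n k; rewrite ?orb_true_iff; try discriminate; eauto.
  - intros [H | H]; [destruct (pre_fo_oc _ _ _ _ H) | destruct (IH _ _ H)]; tauto.
  - intros [H | H]; [destruct (IHP _ _ H) | destruct (IHQ _ _ H)]; tauto.
Qed.

Lemma chan_is_cc x n k c :
  chan_is x (cc_chan n k c) = true -> x <> k /\ chan_is x c = true.
Proof.
  destruct c as [c | i]; simpl; try discriminate.
  destruct (Nat.eqb c k) eqn:E; simpl; try discriminate.
  rewrite Nat.eqb_eq, Nat.eqb_neq in *; intros; subst; auto.
Qed.

Lemma pre_fo_cc x n k p :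
  pre_fo x (cc_pre n k p) = true -> x <> k /\ pre_fo x p = true.
Proof. induction p; simpl; intros; try discriminate; eauto using chan_is_cc. Qed.

Lemma in_fo_cc x P : forall n k,
  in_fo x (cc n k P) = true -> x <> k /\ in_fo x P = true.
Proof.
  induction P as [| p P IH | P IHP Q IHQ | P IH | P IH];
    simpl; intros n k; rewrite ?orb_true_iff; try discriminate; eauto.
  - intros [H | H]; [destruct (pre_fo_cc _ _ _ _ H) | destruct (IH _ _ H)]; tauto.
  - intros [H | H]; [destruct (IHP _ _ H) | destruct (IHQ _ _ H)]; tauto.
Qed.

(* Substituting a channel for a variable leaves fo unchanged, since output
   objects are always channels. *)
Lemma pre_fo_ov x n l p : pre_fo x (ov_pre n l p) = pre_fo x p.
Proof. induction p; simpl; auto. Qed.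

Lemma in_fo_ov x P : forall n l, in_fo x (ov n l P) = in_fo x P.
Proof.
  induction P; simpl; intros; rewrite ?pre_fo_ov, ?IHP, ?IHP1, ?IHP2; auto.
Qed.

(* A free output k<x> can only be performed if x is in fo(P); the side
   condition of (res) guarantees that the restricted channel is not x. *)
Lemma free_output_in_fo P al P' :
  trans P al P' -> forall k x, al = AOut k x -> in_fo x P = true.
Proof.
  induction 1; intros k0 x E; try discriminate; simpl; rewrite ?orb_true_iff.
  - injection E as -> ->; left; apply Nat.eqb_refl.
  - specialize (IHtrans _ _ E); simpl in IHtrans; rewrite orb_true_iff in IHtrans.
    tauto.
  - rename H0 into Hk_not_in_act.
    subst al; destruct (in_fo_oc _ _ _ _ (IHtrans _ _ eq_refl)) as [-> | Hx]; auto.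
    exfalso; apply Hk_not_in_act; simpl; auto.
  - eauto.
  - eauto.
  - eauto.
Qed.

Lemma fo_step P al P' :
  trans P al P' -> forall x, in_fo x P' = true ->
  in_fo x P = true \/ extrudes al x.
Proof.
  unfold extrudes.
  induction 1; intros x Hx; simpl in *; rewrite ?orb_true_iff in *;
    rewrite ?in_fo_ov in Hx.
  - tauto.
  - tauto.
  - destruct (IHtrans _ Hx) as [Hin | Hext]; [rewrite orb_true_iff in Hin |]; tauto.
  - (* res: the restricted channel k is removed by closing *)
    destruct (in_fo_cc _ _ _ _ Hx) as [Hxk Hx'].
    destruct (IHtrans _ Hx') as [Hin | Hext]; [| auto].
    destruct (in_fo_oc _ _ _ _ Hin); [congruence | auto].
  - (* open: the opened channel l is exactly the extruded one *)
    destruct (IHtrans _ Hx) as [Hin | [? ?]]; [| discriminate].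
    destruct (in_fo_oc _ _ _ _ Hin) as [-> |]; eauto.
  -
    destruct Hx as [Hx | Hx]; [destruct (IHtrans _ Hx)|]; tauto.
  - destruct Hx as [Hx | Hx]; [|destruct (IHtrans _ Hx)]; tauto.
  - destruct Hx as [Hx | Hx];
      [destruct (IHtrans1 _ Hx) as [| [? ?]] | destruct (IHtrans2 _ Hx) as [| [? ?]]];
      try discriminate; tauto.
  - destruct Hx as [Hx | Hx];
      [destruct (IHtrans1 _ Hx) as [| [? ?]] | destruct (IHtrans2 _ Hx) as [| [? ?]]];
      try discriminate; tauto.
  - (* close: the extruded channel is restricted again *)
    destruct Hx as [Hx | Hx]; destruct (in_fo_cc _ _ _ _ Hx) as [Hxl Hx'].
    + destruct (IHtrans1 _ Hx') as [| [? E]]; [tauto | injection E; congruence].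
    + destruct (IHtrans2 _ Hx') as [| [? ?]]; [tauto | discriminate].
  - destruct Hx as [Hx | Hx]; destruct (in_fo_cc _ _ _ _ Hx) as [Hxl Hx'].
    + destruct (IHtrans1 _ Hx') as [| [? ?]]; [tauto | discriminate].
    + destruct (IHtrans2 _ Hx') as [| [? E]]; [tauto | injection E; congruence].
  -
    destruct Hx as [Hx | Hx]; [destruct (IHtrans _ Hx)|]; tauto.
  - destruct Hx as [[Hx | Hx] | Hx];
      [destruct (IHtrans1 _ Hx) as [| [? ?]] | destruct (IHtrans2 _ Hx) as [| [? ?]] |];
      try discriminate; tauto.
  - destruct Hx as [[Hx | Hx] | Hx]; [| | tauto];
      destruct (in_fo_cc _ _ _ _ Hx) as [Hxl Hx'].
    + destruct (IHtrans1 _ Hx') as [| [? E]]; [tauto | injection E; congruence].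
    + destruct (IHtrans2 _ Hx') as [| [? ?]]; [tauto | discriminate].
Qed.

Lemma fo_run_not_extruded (P : nat -> proc) (a : nat -> act) i n x :
  i <= n ->
  (forall j, i <= j < n -> trans (P j) (a j) (P (S j))) ->
  (forall j, i <= j < n -> ~ extrudes (a j) x) ->
  in_fo x (P i) = false -> in_fo x (P n) = false.
Proof.
  intros Hin Hrun Hnoext Hi; induction Hin as [| n Hin IH]; auto.
  destruct (in_fo x (P (S n))) eqn:Hx; auto.
  destruct (fo_step _ _ _ (Hrun n ltac:(lia)) _ Hx) as [Hold | Hext].
  - rewrite IH in Hold; [discriminate | |];
      intros j Hj; [apply Hrun | apply Hnoext]; lia.
  - exfalso; exact (Hnoext n ltac:(lia) Hext).
Qed.

Theorem theorem1 (m : nat) (P : nat -> proc) (a : nat -> act) :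
  lc (P 1) = true ->
  (* the run P_1 --a_1--> P_2 ... --a_m--> P_(m+1) *)
  (forall j, 1 <= j <= m -> trans (P j) (a j) (P (S j))) ->
  (* all bound outputs are chosen fresh *)
  (forall j k l, 1 <= j <= m -> a j = ABOut k l ->
     (forall h, 1 <= h <= j -> in_fn l (P h) = false) /\
     (forall h, 1 <= h < j -> ~ In l (act_n (a h)))) ->
  forall i k l, 1 <= i <= m - 1 -> a i = AIn k l -> in_fo l (P i) = false ->
  forall j k', i + 1 <= j <= m -> a j <> AOut k' l.
Proof.
  intros _ Hrun Hfresh i k l Hi Hai Hfo j k' Hj Haj.
  (* no step from a_i on extrudes l: a_i is an input, and afterwards l is
     not fresh since it occurs in a_i *)
  assert (Hnoext : forall h, i <= h < j -> ~ extrudes (a h) l).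
  { intros h Hh [k0 Hext].
    destruct (Nat.eq_dec h i) as [-> | Hne]; [congruence |].
    destruct (Hfresh h k0 l ltac:(lia) Hext) as [_ Hnot_in].
    apply (Hnot_in i ltac:(lia)); rewrite Hai; simpl; auto. }
  assert (Hj_fo : in_fo l (P j) = false).
  { apply (fo_run_not_extruded P a i); auto; [lia | intros h Hh; apply Hrun; lia]. }
  rewrite (free_output_in_fo _ _ _ (Hrun j ltac:(lia)) _ _ Haj) in Hj_fo.
  discriminate.
Qed.
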